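(* Let $p$ be a NetKAT program that contains no occurrence of $\mathsf{dup}$, and suppose the local compilation $\mathcal{C}(p)$ is defined and equals the forwarding decision diagram $d$. Then for every history $h$, $[\![p]\!]\,h = [\![d]\!]\,h$.
   Context: NetKAT. Fix finitely many fields $f_1,\dots,f_k$, each with natural-number values. A packet $pk$ assigns a natural number $pk.f$ to each field $f$; $pk[f:=n]$ is the packet updated at $f$. A history is a nonempty list of packets, written $pk::h$ (cons) or $\langle pk\rangle$ (singleton). Predicates: $a ::= 1 \mid 0 \mid f=n \mid a+b \mid a\cdot b \mid \neg a$. Programs: $p ::= a \mid f\leftarrow n \mid p+q \mid p\cdot q \mid p^* \mid \mathsf{dup}$. The semantics $[\![p]\!]$ maps histories to sets of histories: $[\![1]\!]h=\{h\}$; $[\![0]\!]h=\emptyset$; $[\![f=n]\!](pk::h)=\{pk::h\}$ if $pk.f=n$ and $\emptyset$ otherwise; $[\![\neg a]\!]h=\{h\}\setminus[\![a]\!]h$; $[\![f\leftarrow n]\!](pk::h)=\{pk[f:=n]::h\}$; $[\![p+q]\!]h=[\![p]\!]h\cup[\![q]\!]h$; $[\![p\cdot q]\!]h=\bigcup_{h'\in[\![p]\!]h}[\![q]\!]h'$; $[\![p^*]\!]h=\bigcup_{i\ge 0}F^i h$ with $F^0h=\{h\}$, $F^{i+1}h=\bigcup_{h'\in[\![p]\!]h}F^ih'$; $[\![\mathsf{dup}]\!](pk::h)=\{pk::pk::h\}$ (on predicates, $+$ and $\cdot$ act as disjunction and conjunction). Forwarding decision diagrams (FDDs). Fields and values carry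 total orders, both written $\sqsubset$. An action $a$ is a finite partial map from fields to values, written $\{f_1\leftarrow n_1,\dots,f_j\leftarrow n_j\}$ with distinct fields; $[\![a]\!](pk::h)=\{pk[f_1:=n_1]\cdots[f_j:=n_j]::h\}$. An FDD is either a constant $\{a_1,\dots,a_m\}$ (a finite set of actions) with $[\![\{a_1,\dots,a_m\}]\!]h=\bigcup_i[\![a_i]\!]h$, or a conditional $(f=n\ ?\ d_1 : d_2)$ with $[\![(f=n?d_1:d_2)]\!](pk::h)=[\![d_1]\!](pk::h)$ if $pk.f=n$ and $[\![d_2]\!](pk::h)$ otherwise. Thus $\{\}$ drops all packets and $\{\{\}\}$ is the identity. Operations on FDDs. Union $d_1+d_2$: $\{A_1\}+\{A_2\}=A_1\cup A_2$ (union of action sets); $(f=n?d_{11}:d_{12})+C=(f=n?d_{11}+C:d_{12}+C)$ for a constant $C$; for $D_2=(f_2=n_2?d_{21}:d_{22})$: $(f_1=n_1?d_{11}:d_{12})+D_2$ equals $(f_1=n_1?d_{11}+d_{21}:d_{12}+d_{22})$ if $f_1=f_2,n_1=n_2$; equals $(f_1=n_1?d_{11}+d_{22}:d_{12}+D_2)$ if $f_1=f_2$ and $n_1\sqsubset n_2$; equals $(f_1=n_1?d_{11}+D_2:d_{12}+D_2)$ if $f_1\sqsubset f_2$; the remaining cases are defined symmetrically. Positive restriction $(f=n)\Rightarrow d$: for a constant $d$ it is $(f=n?d:\{\})$; for $d=(f_1=n_1?d_{11}:d_{12})$ it is $(f=n?d_{11}:\{\})$ if $f=f_1,n=n_1$;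 $(f=n)\Rightarrow d_{12}$ if $f=f_1,n\neq n_1$; $(f=n?d:\{\})$ if $f\sqsubset f_1$; and $(f_1=n_1?(f=n)\Rightarrow d_{11}:(f=n)\Rightarrow d_{12})$ otherwise. Negative restriction $(f\neq n)\Rightarrow d$ is an FDD with $[\![(f\neq n)\Rightarrow d]\!](pk::h)=\emptyset$ if $pk.f=n$ and $=[\![d]\!](pk::h)$ otherwise. Sequencing of actions $a;a'$ is the right-biased merge (value of $a'$ where defined, else of $a$). Sequencing $d_1;d_2$: $a;\{a_1,\dots,a_m\}=\{a;a_1,\dots,a;a_m\}$; $a;(f=n?d_1:d_2)$ equals $a;d_1$ if $f\leftarrow n\in a$, equals $a;d_2$ if $f\leftarrow n'\in a$ with $n'\neq n$, and equals $(f=n?a;d_1:a;d_2)$ otherwise; $\{a_1,\dots,a_m\};d=(a_1;d)+\dots+(a_m;d)$ (which is $\{\}$ when $m=0$); $(f=n?d_{11}:d_{12});d_2=((f=n)\Rightarrow(d_{11};d_2))+((f\neq n)\Rightarrow(d_{12};d_2))$. Negation: $\neg\{\}=\{\{\}\}$; $\neg\{a_1,\dots,a_m\}=\{\}$ for $m\ge1$; $\neg(f=n?d_1:d_2)=(f=n?\neg d_1:\neg d_2)$. Star: $d^*$ is a fixed point of $d'\mapsto\{\{\}\}+(d;d')$ obtained by iteration. Local compilation $\mathcal{C}$: $\mathcal{C}(0)=\{\}$, $\mathcal{C}(1)=\{\{\}\}$, $\mathcal{C}(f\leftarrow n)=\{\{f\leftarrow n\}\}$, $\mathcal{C}(f=n)=(f=n?\{\{\}\}:\{\})$,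 $\mathcal{C}(\neg a)=\neg\mathcal{C}(a)$, $\mathcal{C}(p+q)=\mathcal{C}(p)+\mathcal{C}(q)$, $\mathcal{C}(p\cdot q)=\mathcal{C}(p);\mathcal{C}(q)$, $\mathcal{C}(p^* )=\mathcal{C}(p)^*$. *)

From HB Require Import structures.
From mathcomp Require Import all_boot.
From mathcomp Require Import finmap.

Set Implicit Arguments.
Unset Strict Implicit.
Unset Printing Implicit Defensive.

Local Open Scope fset_scope.

Definition packet (F : finType) := {ffun F -> nat}.
(* A (nonempty) history pk::h is represented as the pair (pk, h). *)
Definition history (F : finType) := (packet F * seq (packet F))%type.

Inductive npred (F : finType) :=
| PTrue | PFalse | PTest of F & nat
| POr of npred F & npred F | PAnd of npred F & npred F | PNot of npred F.

Inductive prog (F : finType) :=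
| PFilter of npred F
| PMod of F & nat
| PPar of prog F & prog F
| PSeq of prog F & prog F
| PStar of prog F
| PDup.

Arguments PTrue {F}. Arguments PFalse {F}. Arguments PDup {F}.

Inductive fdd (F : finType) :=
| FConst of {fset {ffun F -> option nat}}
| FCond of F & nat & fdd F & fdd F.

Definition strict_total (T : eqType) (lt : rel T) : Prop :=
  irreflexive lt /\ transitive lt /\ (forall x y, x != y -> lt x y || lt y x).

Section NetKAT.
Variable F : finType.

Definition upd (pk : packet F) (f : F) (n : nat) : packet F :=
  [ffun g => if g == f then n else pk g].

(* ---------- NetKAT semantics: [[p]] h h' means h' \in [[p]] h ---------- *)
Fixpoint psem (a : npred F) (h h' : history F) : Prop :=
  match a with
  | PTrue => h' = h
  | PFalse => False
  | PTest f n => h' = h /\ h.1 f = n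
  | POr a b => psem a h h' \/ psem b h h'
  | PAnd a b => exists h'', psem a h h'' /\ psem b h'' h'
  | PNot a => h' = h /\ ~ psem a h h
  end.

Fixpoint powr (R : history F -> history F -> Prop) (i : nat)
    (h h' : history F) : Prop :=
  match i with
  | 0 => h' = h
  | i.+1 => exists h'', R h h'' /\ powr R i h'' h'
  end.

Fixpoint sem (p : prog F) : history F -> history F -> Prop :=
  match p with
  | PFilter a => psem a
  | PMod f n => fun h h' => h' = (upd h.1 f n, h.2)
  | PPar p q => fun h h' => sem p h h' \/ sem q h h'
  | PSeq p q => fun h h' => exists h'', sem p h h'' /\ sem q h'' h'
  | PStar p => fun h h' => exists i, powr (sem p) i h h'
  | PDup => fun h h' => h' = (h.1, h.1 :: h.2)
  end.

Fixpoint dup_free (p : prog F) : bool :=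
  match p with
  | PFilter _ | PMod _ _ => true
  | PPar p q | PSeq p q => dup_free p && dup_free q
  | PStar p => dup_free p
  | PDup => false
  end.

Definition act_app (a : {ffun F -> option nat}) (h : history F) : history F :=
  ([ffun g => if a g is Some v then v else h.1 g], h.2).

Fixpoint fsem (d : fdd F) (h h' : history F) : Prop :=
  match d with
  | FConst A => exists2 a, a \in A & h' = act_app a h
  | FCond f n d1 d2 => if h.1 f == n then fsem d1 h h' else fsem d2 h h'
  end.

(* Specification of negative restriction (only given semantically). *)
Definition negres_spec (negres : F -> nat -> fdd F -> fdd F) : Prop :=
  forall f n d (h h' : history F),
    fsem (negres f n d) h h' <-> (if h.1 f == n then False else fsem d h h').

Variables (ltF : rel F) (ltV : rel nat).
Variable negres : F -> nat -> fdd F -> fdd F.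

Fixpoint funion (d1 d2 : fdd F) {struct d1} : fdd F :=
  match d1 with
  | FConst A1 =>
      (fix ua (d2 : fdd F) : fdd F :=
         match d2 with
         | FConst A2 => FConst (A1 `|` A2)
         | FCond f n d21 d22 => FCond f n (ua d21) (ua d22)
         end) d2
  | FCond f1 n1 d11 d12 =>
      (fix u2 (d2 : fdd F) : fdd F :=
         match d2 with
         | FConst C => FCond f1 n1 (funion d11 (FConst C)) (funion d12 (FConst C))
         | FCond f2 n2 d21 d22 =>
             if f1 == f2 then
               if n1 == n2 then FCond f1 n1 (funion d11 d21) (funion d12 d22)
               else if ltV n1 n2 then FCond f1 n1 (funion d11 d22) (funion d12 d2)
               else FCond f2 n2 (funion d12 d21) (u2 d22)
             else if ltF f1 f2 then FCond f1 n1 (funion d11 d2) (funion d12 d2)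
             else FCond f2 n2 (u2 d21) (u2 d22)
         end) d2
  end.

Fixpoint posres (f : F) (n : nat) (d : fdd F) : fdd F :=
  match d with
  | FConst _ => FCond f n d (FConst fset0)
  | FCond f1 n1 d11 d12 =>
      if f == f1 then
        if n == n1 then FCond f n d11 (FConst fset0) else posres f n d12
      else if ltF f f1 then FCond f n d (FConst fset0)
      else FCond f1 n1 (posres f n d11) (posres f n d12)
  end.

Definition act_comp (a a' : {ffun F -> option nat}) : {ffun F -> option nat} :=
  [ffun g => if a' g is Some v then Some v else a g].

Fixpoint act_seq (a : {ffun F -> option nat}) (d : fdd F) : fdd F :=
  match d with
  | FConst A => FConst [fset act_comp a x | x in A]
  | FCond f n d1 d2 =>
      if a f == Some n then act_seq a d1
      else if a f is Some _ then act_seq a d2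
      else FCond f n (act_seq a d1) (act_seq a d2)
  end.

Definition sum_acts (s : seq {ffun F -> option nat}) (d : fdd F) : fdd F :=
  match s with
  | [::] => FConst fset0
  | a :: s' => foldl (fun acc a' => funion acc (act_seq a' d)) (act_seq a d) s'
  end.

Fixpoint fseq (d1 d2 : fdd F) : fdd F :=
  match d1 with
  | FConst A => sum_acts (enum_fset A) d2
  | FCond f n d11 d12 => funion (posres f n (fseq d11 d2)) (negres f n (fseq d12 d2))
  end.

Definition id_act : {ffun F -> option nat} := [ffun => None].
Definition single_act (f : F) (n : nat) : {ffun F -> option nat} :=
  [ffun g => if g == f then Some n else None].
Definition id_fdd : fdd F := FConst [fset id_act].
Definition drop_fdd : fdd F := FConst fset0.

Fixpoint fneg (d : fdd F) : fdd F :=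
  match d with
  | FConst A => if A == fset0 then id_fdd else drop_fdd
  | FCond f n d1 d2 => FCond f n (fneg d1) (fneg d2)
  end.

Definition star_step (d d' : fdd F) : fdd F := funion id_fdd (fseq d d').
Definition is_star (d ds : fdd F) : Prop :=
  exists k, ds = iter k (star_step d) id_fdd /\ star_step d ds = ds.

(* ---------- local compilation (partial, hence a relation) ---------- *)
Fixpoint compp (a : npred F) : fdd F :=
  match a with
  | PTrue => id_fdd
  | PFalse => drop_fdd
  | PTest f n => FCond f n id_fdd drop_fdd
  | POr a b => funion (compp a) (compp b)
  | PAnd a b => fseq (compp a) (compp b)
  | PNot a => fneg (compp a)
  end.

Inductive compiles : prog F -> fdd F -> Prop :=
| comp_filter a : compiles (PFilter a) (compp a)
| comp_mod f n : compiles (PMod f n) (FConst [fset single_act f n])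
| comp_par p q dp dq :
    compiles p dp -> compiles q dq -> compiles (PPar p q) (funion dp dq)
| comp_seq p q dp dq :
    compiles p dp -> compiles q dq -> compiles (PSeq p q) (fseq dp dq)
| comp_star p dp ds :
    compiles p dp -> is_star dp ds -> compiles (PStar p) ds.

End NetKAT.

(* Each FDD operation used by the compiler has a pointwise meaning: union is
   disjunction, positive (negative) restriction guards the diagram by the test
   f = n (f <> n), prefixing an action applies it to the head packet first,
   and sequencing is relational composition.
   For p*, the fixed-point equation of d* absorbs every finite iterate of p,
   and conversely the iterate of length k that defines d* unfolds into at
   most k steps of p. *)
From mathcomp Require Import all_boot.
From mathcomp Require Import finmap.

Set Implicit Arguments.
Unset Strict Implicit.
Unset Printing Implicit Defensive.
Local Open Scope fset_scope.

Section FddSemantics.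
Variable F : finType.
Implicit Types (d : fdd F) (h : history F) (a : {ffun F -> option nat}).

Lemma fsem_drop h h' : fsem (drop_fdd F) h h' <-> False.
Proof. by split=> // -[a]; rewrite in_fset0. Qed.

Lemma act_app_id h : act_app (id_act F) h = h.
Proof. by case: h => pk s; congr pair; apply/ffunP=> g; rewrite !ffunE. Qed.

Lemma act_app_single f n h :
  act_app (single_act f n) h = (upd h.1 f n, h.2).
Proof. by congr pair; apply/ffunP=> g; rewrite !ffunE; case: eqP. Qed.

Lemma fsem_act a h h' : fsem (FConst [fset a]) h h' <-> h' = act_app a h.
Proof.
by split=> [[a'] | ->]; [rewrite in_fset1 => /eqP -> | exists a; rewrite ?in_fset1].
Qed.

Lemma fsem_id h h' : fsem (id_fdd F) h h' <-> h' = h.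
Proof. by rewrite fsem_act act_app_id. Qed.

Lemma act_app_comp a a' h :
  act_app (act_comp a a') h = act_app a' (act_app a h).
Proof. by congr pair; apply/ffunP=> g; rewrite !ffunE; case: (a' g). Qed.

Lemma fsem_act_seq a d h h' :
  fsem (act_seq a d) h h' <-> fsem d (act_app a h) h'.
Proof.
elim: d h h' => [A | f n d1 IH1 d2 IH2] h h' /=.
  split=> [[_ /imfsetP[a' /= a'A ->] ->] | [a' a'A ->]].
    by exists a'; rewrite // act_app_comp.
  by exists (act_comp a a'); rewrite ?act_app_comp //; apply/imfsetP; exists a'.
rewrite ffunE; case: (a f) => [v|] /=; first change (Some v == Some n) with (v == n).
all: by case: ifP => _; [apply: IH1 | apply: IH2].
Qed.

Section Operations.
Variables (ltF : rel F) (ltV : rel nat).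

(* The orders only decide the shape of the resulting diagram, never its
   meaning, so no assumption on ltF and ltV is needed. *)
Lemma fsem_funion d1 d2 h h' :
  fsem (funion ltF ltV d1 d2) h h' <-> fsem d1 h h' \/ fsem d2 h h'.
Proof.
elim: d1 d2 h h' => [A1 | f1 n1 d11 IH11 d12 IH12] d2.
  elim: d2 => [A2 | f2 n2 d21 IH21 d22 IH22] h h' /=; last by case: ifP.
  split=> [[a] | [[a aA ->] | [a aA ->]]].
    by rewrite in_fsetU => /orP[] aA ->; [left | right]; exists a.
  - by exists a; rewrite // in_fsetU aA.
  - by exists a; rewrite // in_fsetU aA orbT.
elim: d2 => [C | f2 n2 d21 IH21 d22 IH22] h h' /=; first by case: ifP.
case: (eqVneq f1 f2) => [<- | _]; last by case: ifP => _ /=; case: ifP.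
case: (eqVneq n1 n2) => [<- | n12] /=; first by case: ifP.
case: ifP => _ /=.
  have [-> | Hn1] := eqVneq (h.1 f1) n1; first by rewrite ?eqxx (negbTE n12) IH11.
  by rewrite ?(negbTE Hn1) IH12.
have [-> | Hn2] := eqVneq (h.1 f1) n2; first by rewrite ?eqxx eq_sym (negbTE n12) IH12.
by rewrite ?(negbTE Hn2); exact: IH22.
Qed.

Lemma fsem_posres f n d h h' :
  fsem (posres ltF f n d) h h' <-> h.1 f == n /\ fsem d h h'.
Proof.
have fsem_test d' h1 h1' :
    fsem (FCond f n d' (drop_fdd F)) h1 h1' <-> h1.1 f == n /\ fsem d' h1 h1'.
  by move: (fsem_drop h1 h1') => /=; case: eqP; intuition.
elim: d h h' => [A | f1 n1 d1 IH1 d2 IH2] h h'; first exact: (fsem_test (FConst A)).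
rewrite /=; case: (eqVneq f f1) => [<- | _].
  case: (eqVneq n n1) => [<- | nn1]; first by rewrite fsem_test; case: ifP; intuition.
  rewrite IH2; case: (eqVneq (h.1 f) n) => [-> | _]; last by intuition.
  by rewrite (negbTE nn1).
case: ifP => _; first exact: (fsem_test (FCond f1 n1 d1 d2)).
by rewrite /=; case: ifP => _; [rewrite IH1 | rewrite IH2].
Qed.

Lemma fsem_foldl_union d s acc h h' :
  fsem (foldl (fun acc a' => funion ltF ltV acc (act_seq a' d)) acc s) h h' <->
  fsem acc h h' \/ exists2 a, a \in s & fsem (act_seq a d) h h'.
Proof.
elim: s acc => [|a s IH] acc /=; first by split; [left | case=> // -[]].
rewrite IH fsem_funion; split.
  case=> [[Hacc | Ha] | [b bs Hb]]; [by left | right | right].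
    by exists a; rewrite ?mem_head.
  by exists b; rewrite ?in_cons ?bs ?orbT.
case=> [Hacc | [b]]; first by left; left.
by rewrite in_cons => /orP[/eqP -> | bs] Hb; [left; right | right; exists b].
Qed.

Lemma fsem_sum_acts s d h h' :
  fsem (sum_acts ltF ltV s d) h h' <->
  exists2 a, a \in s & fsem (act_seq a d) h h'.
Proof.
case: s => [|a s]; first by rewrite fsem_drop; split=> // -[].
rewrite /= fsem_foldl_union; split.
  case=> [Ha | [b bs Hb]]; first by exists a; rewrite ?mem_head.
  by exists b; rewrite ?in_cons ?bs ?orbT.
by case=> b; rewrite in_cons => /orP[/eqP -> | bs] Hb; [left | right; exists b].
Qed.

Variable negres : F -> nat -> fdd F -> fdd F.
Hypothesis negresP : negres_spec negres.

Lemma fsem_fseq d1 d2 h h' :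
  fsem (fseq ltF ltV negres d1 d2) h h' <->
  exists h'', fsem d1 h h'' /\ fsem d2 h'' h'.
Proof.
elim: d1 h h' => [A | f n d11 IH1 d12 IH2] h h' /=.
  rewrite fsem_sum_acts; split=> [[a aA] | [_ [[a aA ->] Hd2]]].
    by rewrite fsem_act_seq => Hd2; exists (act_app a h); split=> //; exists a.
  by exists a; rewrite ?fsem_act_seq.
rewrite fsem_funion fsem_posres negresP.
by case: eqVneq => _ /=; rewrite ?IH1 ?IH2; intuition.
Qed.

Lemma fsem_fneg d h h' :
  fsem (fneg d) h h' <-> h' = h /\ ~ exists h'', fsem d h h''.
Proof.
elim: d h h' => [A | f n d1 IH1 d2 IH2] h h' /=; last by case: ifP.
case: eqP => [-> | /eqP A0].
  by rewrite fsem_id; split=> [-> | [] //]; split=> // -[? [a]]; rewrite in_fset0.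
rewrite fsem_drop; split=> // -[_]; apply.
have [a aA] : exists a, a \in A by case/fset0Pn: A0 => a aA; exists a.
by exists (act_app a h), a.
Qed.

Lemma psem_eq (b : npred F) h h' : psem b h h' -> h' = h.
Proof.
elim: b h h' => [| | f n | b IHb c IHc | b IHb c IHc | b IHb] h h' //=.
- by case.
- by case=> [/IHb | /IHc].
- by case=> h'' [/IHb -> /IHc].
- by case.
Qed.

Lemma fsem_compp (b : npred F) h h' :
  fsem (compp ltF ltV negres b) h h' <-> psem b h h'.
Proof.
elim: b h h' => [| | f n | b IHb c IHc | b IHb c IHc | b IHb] h h' /=.
- exact: fsem_id.
- exact: fsem_drop.
- by move: (fsem_id h h') (fsem_drop h h') => /=; case: eqP; intuition.
- by rewrite fsem_funion IHb IHc.
- rewrite fsem_fseq.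
  by split=> -[h'' [H1 H2]]; exists h''; move: H1 H2; rewrite IHb IHc.
- rewrite fsem_fneg; apply: and_iff_compat_l; apply: not_iff_compat.
  split=> [[h'' Hb] | Hb]; last by exists h; rewrite IHb.
  by move/IHb/psem_eq: (Hb) => Eh; rewrite Eh in Hb; apply/IHb.
Qed.

Lemma fsem_star (p : prog F) dp ds :
  (forall h h', sem p h h' <-> fsem dp h h') ->
  is_star ltF ltV negres dp ds ->
  forall h h', sem (PStar p) h h' <-> fsem ds h h'.
Proof.
move=> IHp [k [-> ds_fix]] h h' /=; split=> [[i] | ].
  elim: i h => [|i IHi] h /= => [-> | [h'' [Hp Hi]]];
    rewrite -ds_fix /star_step fsem_funion ?fsem_id ?fsem_fseq; first by left.
  by right; exists h''; split; [apply/IHp | apply: IHi].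
elim: k h {ds_fix} => [|k IHk] h; first by rewrite fsem_id => ->; exists 0.
rewrite iterS /star_step fsem_funion fsem_id fsem_fseq.
case=> [-> | [h'' [Hp /IHk [i Hi]]]]; first by exists 0.
by exists i.+1, h''; split; rewrite ?IHp.
Qed.

End Operations.
End FddSemantics.

Theorem theorem1 (F : finType) (ltF : rel F) (ltV : rel nat)
    (negres : F -> nat -> fdd F -> fdd F) :
  strict_total ltF -> strict_total ltV -> negres_spec negres ->
  forall (p : prog F) (d : fdd F),
    dup_free p -> compiles ltF ltV negres p d ->
    forall h h' : history F, sem p h h' <-> fsem d h h'.
Proof.
move=> _ _ negresP p d _ Hc.
elim: Hc => {p d} [b | f n | p q dp dq _ IHp _ IHq | p q dp dq _ IHp _ IHq
                  | p dp ds _ IHp ds_star] h h'.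
- by rewrite fsem_compp.
- by rewrite fsem_act act_app_single.
- by rewrite /= fsem_funion IHp IHq.
- rewrite /= fsem_fseq //.
  by split=> -[h'' [H1 H2]]; exists h''; rewrite IHp IHq in H1 H2 *.
- exact: (fsem_star negresP IHp ds_star).
Qed.
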